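(* Let $f:X\to Y$ be a continuous surjective map between compact Hausdorff spaces. Then for all $\mu,\nu\in HX$ and $t\in[0,1]$ we have $e(Hf(\mu),Hf(\nu),t)=Hf(e(\mu,\nu,t))$.
   Context: For a compact Hausdorff space $X$, let $HM(X)$ be the set of all maps $\alpha:[0,1)\to X$ for which there exist $0=t_0<t_1<\dots<t_n=1$ such that $\alpha$ is constant on each $[t_i,t_{i+1})$. Let $C(X)$ be the set of continuous real-valued functions on $X$. For $\varphi\in C(X)$ and $0\le a<b\le 1$ define $\varphi_{(a,b)}:HM(X)\to\mathbb{R}$ by $\varphi_{(a,b)}(\alpha)=\frac{1}{b-a}\int_a^b\varphi(\alpha(t))\,dt$, and let $S_{HM}(X)$ be the set of all such functions. The map $\alpha\mapsto(\varphi_{(a,b)}(\alpha))$ embeds $HM(X)$ into the product $\prod_{\varphi_{(a,b)}\in S_{HM}(X)}[\min\varphi,\max\varphi]$; $HX$ is the closure of the image of $HM(X)$, and $p_{\varphi_{(a,b)}}:HX\to\mathbb{R}$ is the coordinate projection. For continuous $f:X\to Y$, $Hf:HX\to HY$ is the unique continuous map with $p_{\varphi_{(a,b)}}\circ Hf=p_{(\varphi\circ f)_{(a,b)}}$ for all $\varphi\in C(Y)$, $0\le a<b\le1$ (it extends $\alpha\mapsto f\circ\alpha$). The map $e_1:HM(X)\times HM(X)\times[0,1]\to HM(X)$ is given by $e_1(\alpha_1,\alpha_2,t)(l)=\alpha_1(l)$ if $l<t$ and $=\alpha_2(l)$ if $l\ge t$; $e:HX\times HX\times[0,1]\to HX$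 denotes its (unique) continuous extension. *)

From HB Require Import structures.
From mathcomp Require Import all_boot all_order all_algebra.
From mathcomp Require Import all_classical all_reals all_analysis.
Set Implicit Arguments. Unset Strict Implicit. Unset Printing Implicit Defensive.
Import Order.TTheory GRing.Theory Num.Theory.
Import numFieldNormedType.Exports.
Local Open Scope classical_set_scope.
Local Open Scope ring_scope.

Section HDefs.
Variables (R : realType).

(* HM(X): maps [0,1) -> X, constant on the pieces [t_i, t_{i+1}) of a finite
   partition 0 = t_0 < ... < t_n = 1.  They are represented as total maps
   R -> X; values outside [0,1) are irrelevant. *)
Definition is_HM (X : Type) (alpha : R -> X) : Prop :=
  exists (n : nat) (t : nat -> R),
    [/\ t 0%N = 0, t n = 1,
        (forall i, (i < n)%N -> t i < t i.+1) &
        (forall i, (i < n)%N -> forall l, t i <= l -> l < t i.+1 ->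
           alpha l = alpha (t i))].

Record Hidx (X : topologicalType) := MkHidx {
  hphi : X -> R;
  ha : R;
  hb : R;
  hphi_cont : continuous hphi;
  hab : [/\ 0 <= ha, ha < hb & hb <= 1] }.

Definition Hprod (X : topologicalType) := {ptws Hidx X -> R}.

Definition Havg (X : topologicalType) (phi : X -> R) (a b : R) (alpha : R -> X) : R :=
  (b - a)^-1 * (\int[lebesgue_measure]_(t in `[a, b]) phi (alpha t)).

Definition Hemb (X : topologicalType) (alpha : R -> X) : Hprod X :=
  fun i => Havg (hphi i) (ha i) (hb i) alpha.

Definition HX (X : topologicalType) : set (Hprod X) :=
  closure (@Hemb X @` [set alpha | is_HM alpha]).

Definition e1 (X : Type) (alpha1 alpha2 : R -> X) (t : R) : R -> X :=
  fun l => if l < t then alpha1 l else alpha2 l.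

Definition is_e_ext (X : topologicalType) (e : Hprod X * Hprod X * R -> Hprod X) : Prop :=
  {within [set p | HX p.1.1 /\ HX p.1.2 /\ 0 <= p.2 <= 1], continuous e} /\
  (forall (alpha1 alpha2 : R -> X) t, is_HM alpha1 -> is_HM alpha2 -> 0 <= t <= 1 ->
     e (@Hemb X alpha1, @Hemb X alpha2, t) = @Hemb X (e1 alpha1 alpha2 t)).

Definition Hidx_comp (X Y : topologicalType) (f : X -> Y) (hf : continuous f)
  (i : Hidx Y) : Hidx X :=
  @MkHidx X (hphi i \o f) (ha i) (hb i)
    (fun x => continuous_comp (hf x) (@hphi_cont Y i (f x))) (hab i).

Definition Hmap (X Y : topologicalType) (f : X -> Y) (hf : continuous f)
  (mu : Hprod X) : Hprod Y :=
  fun i => mu (Hidx_comp hf i).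

End HDefs.

From HB Require Import structures.
From mathcomp Require Import all_boot all_order all_algebra.
From mathcomp Require Import all_classical all_reals all_analysis.
Import Order.TTheory GRing.Theory Num.Theory.
Import numFieldNormedType.Exports.
Local Open Scope classical_set_scope.
Local Open Scope ring_scope.

(* Both sides of the identity are continuous in (mu, nu) on HX x HX, and on
   the dense set of pairs of step maps they agree because
   e1 (f \o a1) (f \o a2) t = f \o e1 a1 a2 t.  Since the product space is
   Hausdorff this forces equality everywhere. *)

Lemma ptws_continuous (S T : topologicalType) (I : Type) (g : S -> {ptws I -> T}) :
  (forall i, continuous (fun s => g s i)) -> continuous g.
Proof.
move=> gi s; apply/cvg_sup => i A /= [B [[C oC <-] Bgs] BA].
by apply: filterS BA _; apply: (gi i); exact: open_nbhs_nbhs.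
Qed.

Lemma within_continuous_nbhsX3 {A B C T : topologicalType} {D : set (A * B * C)}
    {g : A * B * C -> T} {a : A} {b : B} {c : C} {U : set T} :
  {within D, continuous g} -> D (a, b, c) -> nbhs (g (a, b, c)) U ->
  exists V1 V2 V3, [/\ nbhs a V1, nbhs b V2, nbhs c V3 &
    forall x y z, V1 x -> V2 y -> V3 z -> D (x, y, z) -> U (g (x, y, z))].
Proof.
move=> /subspace_continuousP gc Dabc /(gc _ Dabc).
move=> [[V12 V3] /= [[[V1 V2] /= [nV1 nV2] sub12] nV3] sub].
exists V1, V2, V3; split => // x y z V1x V2y V3z Dxyz.
by apply: sub => //; split => /=; [exact: sub12|].
Qed.

Section Hmap_properties.
Context {R : realType} {X Y : topologicalType} {f : X -> Y} (hf : continuous f).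

Lemma Hmap_continuous : continuous (Hmap (R:=R) hf).
Proof.
apply: ptws_continuous => i.
(* The library's product lemmas need an eqType of indices; [{classic _}]
   provides one without changing the product topology. *)
exact: (@proj_continuous {classic (Hidx R X)} (fun=> R) (Hidx_comp hf i)).
Qed.

Lemma Hmap_Hemb (a : R -> X) : Hmap hf (Hemb a) = Hemb (f \o a).
Proof. by []. Qed.

Lemma is_HM_comp (a : R -> X) : is_HM a -> is_HM (f \o a).
Proof.
move=> [n [t [t0 tn t_incr a_step]]]; exists n, t; split => // i lt_in l til lti.
by rewrite /= (a_step i lt_in l til lti).
Qed.

Lemma e1_comp (a1 a2 : R -> X) (t : R) : e1 (f \o a1) (f \o a2) t = f \o e1 a1 a2 t.
Proof. by apply: funext => l; rewrite /e1 /=; case: ifP. Qed.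

Lemma HX_Hemb (Z : topologicalType) (a : R -> Z) : is_HM a -> HX (Hemb a).
Proof. by move=> HMa; apply: subset_closure; exists a. Qed.

Lemma Hmap_HX {mu : Hprod R X} : HX mu -> HX (Hmap hf mu).
Proof.
move=> HXmu B nB.
have /HXmu [_ [[a HMa <-] Ba]] : nbhs mu (Hmap hf @^-1` B) by exact: Hmap_continuous.
by exists (Hemb (f \o a)); split => //; exists (f \o a) => //; exact: is_HM_comp.
Qed.

Lemma e_ext_Hmap_Hemb {eX : Hprod R X * Hprod R X * R -> Hprod R X}
    {eY : Hprod R Y * Hprod R Y * R -> Hprod R Y} {a1 a2 : R -> X} {t : R} :
  is_e_ext eX -> is_e_ext eY -> is_HM a1 -> is_HM a2 -> 0 <= t <= 1 ->
  eY (Hmap hf (Hemb a1), Hmap hf (Hemb a2), t) = Hmap hf (eX (Hemb a1, Hemb a2, t)).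
Proof.
move=> [_ eX_Hemb] [_ eY_Hemb] HMa1 HMa2 t01.
rewrite !Hmap_Hemb (eY_Hemb _ _ _ (is_HM_comp _ HMa1) (is_HM_comp _ HMa2) t01).
by rewrite e1_comp eX_Hemb.
Qed.

End Hmap_properties.

Theorem lemma3p1 (R : realType) (X Y : topologicalType)
  (cX : compact [set: X]) (hX : hausdorff_space X)
  (cY : compact [set: Y]) (hY : hausdorff_space Y)
  (f : X -> Y) (hf : continuous f) (fsurj : forall y : Y, exists x : X, f x = y)
  (eX : Hprod R X * Hprod R X * R -> Hprod R X)
  (eY : Hprod R Y * Hprod R Y * R -> Hprod R Y) :
  is_e_ext eX -> is_e_ext eY ->
  forall (mu nu : Hprod R X) (t : R), HX mu -> HX nu -> 0 <= t <= 1 ->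
    eY (Hmap hf mu, Hmap hf nu, t) = Hmap hf (eX (mu, nu, t)).
Proof.
move=> eXext eYext mu nu t HXmu HXnu t01.
apply: (@hausdorff_product {classic (Hidx R Y)} (fun=> R) (fun=> @Rhausdorff R)).
move=> U W nU nW.
have [A1 [A2 [C1 [nA1 nA2 /nbhs_singleton C1t eY_U]]]] :=
  within_continuous_nbhsX3 eYext.1
    (conj (Hmap_HX hf HXmu) (conj (Hmap_HX hf HXnu) t01)) nU.
have [B1 [B2 [C2 [nB1 nB2 /nbhs_singleton C2t eX_W]]]] :=
  within_continuous_nbhsX3 eXext.1 (conj HXmu (conj HXnu t01))
    (Hmap_continuous hf _ _ nW).
have [_ [[a1 HMa1 <-] [B1a1 A1a1]]] := HXmu _ (filterI nB1 (Hmap_continuous hf _ _ nA1)).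
have [_ [[a2 HMa2 <-] [B2a2 A2a2]]] := HXnu _ (filterI nB2 (Hmap_continuous hf _ _ nA2)).
exists (eY (Hmap hf (Hemb a1), Hmap hf (Hemb a2), t)); split.
  apply: eY_U => //; rewrite !Hmap_Hemb.
  by split; [|split] => //; apply: HX_Hemb; exact: is_HM_comp.
rewrite (e_ext_Hmap_Hemb hf eXext eYext HMa1 HMa2 t01).
by apply: eX_W => //; split; [|split] => //; exact: HX_Hemb.
Qed.
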